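(* Let $(\Omega,\mathcal F)$ be a measurable space, $\mathcal I\in\Sigma$, and $A_n\in\mathcal F$, $n\in\mathbb N$. (1) If $A_1\subset A_2\subset\cdots$, set $\mathcal I_{\mathcal A}=\{I\cap A_1\mid I\in\mathcal I\}\cup\{(I\cup A_n)\cap A_{n+1}\mid I\in\mathcal I,\ n\in\mathbb N\}\cup\{I\cup\bigcup_{n}A_n\mid I\in\mathcal I\}$. Then $A_n\in\mathcal I_{\mathcal A}$ for all $n$, $\bigcup_n A_n\in\mathcal I_{\mathcal A}$, and $\mathcal I_{\mathcal A}\in\Sigma$. (2) If $A_1\supset A_2\supset\cdots$, set $\mathcal I_{\mathcal A}=\{I\cap\bigcap_n A_n\mid I\in\mathcal I\}\cup\{(I\cup A_{n+1})\cap A_n\mid I\in\mathcal I,\ n\in\mathbb N\}\cup\{I\cup A_1\mid I\in\mathcal I\}$. Then $A_n\in\mathcal I_{\mathcal A}$ for all $n$, $\bigcap_n A_n\in\mathcal I_{\mathcal A}$, and $\mathcal I_{\mathcal A}\in\Sigma$.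
   Context: $\Sigma$ denotes the set of all classes $\mathcal I\subset\mathcal F$ that are chains (totally ordered by inclusion), contain $\emptyset$ and $\Omega$, and satisfy $\sigma[\mathcal I]=\mathcal F$. *)

From mathcomp Require Import all_boot all_order.
From mathcomp Require Import all_classical all_reals.
From mathcomp Require Import measure.
Set Implicit Arguments. Unset Strict Implicit. Unset Printing Implicit Defensive.
Local Open Scope classical_set_scope.

Definition in_Sigma (T : Type) (F : set (set T)) (I : set (set T)) : Prop :=
  [/\ I `<=` F,
      (forall A B, I A -> I B -> A `<=` B \/ B `<=` A),
      I set0, I setT & <<s I >> = F].

Definition IA_incr (T : Type) (I : set (set T)) (A : nat -> set T) : set (set T) :=
  [set J | (exists2 C, I C & J = C `&` A 0%N)
        \/ (exists C n, I C /\ J = (C `|` A n) `&` A n.+1)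
        \/ (exists2 C, I C & J = C `|` \bigcup_n A n)].

Definition IA_decr (T : Type) (I : set (set T)) (A : nat -> set T) : set (set T) :=
  [set J | (exists2 C, I C & J = C `&` \bigcap_n A n)
        \/ (exists C n, I C /\ J = (C `|` A n.+1) `&` A n)
        \/ (exists2 C, I C & J = C `|` A 0%N)].

From mathcomp Require Import all_boot all_order.
From mathcomp Require Import all_classical all_reals.
From mathcomp Require Import measure.
Local Open Scope classical_set_scope.

(* Each class I_A is the union, over a countable family of strips [L_k, U_k],
   of the images of I under the monotone maps C |-> (C u L_k) n U_k: for
   increasing A the strips are [0, A_0], [A_n, A_(n+1)] and [U_n A_n, Omega],
   for decreasing A they are [0, N_n A_n], [A_(n+1), A_n] and [A_0, Omega]
   (indexed by option nat in both cases).  Distinct strips lie one above the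
   other, so the images of the chain I form a chain, whose walls L_k and U_k
   are the images of 0 and Omega.  As the strips cover Omega, every C in I is
   the countable union of the sets ((C u L_k) n U_k) \ L_k = C n (U_k \ L_k),
   hence sigma[I] lies in the sigma-algebra generated by I_A. *)

Definition clamp {T : Type} (L U C : set T) : set T := (C `|` L) `&` U.

Section Clamp.
Context {T : Type} (L U : set T).

Lemma clampS : {homo clamp L U : C D / C `<=` D}.
Proof. by move=> C D CD; apply: setSI; apply: setSU. Qed.

Lemma clamp_sub C : clamp L U C `<=` U.
Proof. exact: subIsetr. Qed.

Lemma sub_clamp C : L `<=` U -> L `<=` clamp L U C.
Proof. by move=> LU x Lx; split; [right | exact: LU]. Qed.

Lemma clamp0 : L `<=` U -> clamp L U set0 = L.
Proof. by move=> LU; rewrite /clamp set0U setIidl. Qed.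

Lemma clampT : clamp L U setT = U.
Proof. by rewrite /clamp setTU setTI. Qed.

Lemma clampD C : clamp L U C `\` L = C `&` (U `\` L).
Proof. by rewrite predeqE => x; rewrite /clamp /=; tauto. Qed.

End Clamp.

Definition clamps {T K : Type} (L U : K -> set T) (I : set (set T)) :
    set (set T) :=
  \bigcup_k (clamp (L k) (U k) @` I).

Section Clamps.
Context {T K : Type} {L U : K -> set T} {I : set (set T)}.
Hypothesis LU : forall k, L k `<=` U k.

Lemma clamps_floor k : I set0 -> clamps L U I (L k).
Proof. by move=> I0; exists k => //; exists set0; rewrite // clamp0. Qed.

Lemma clamps_ceil k : I setT -> clamps L U I (U k).
Proof. by move=> IT; exists k => //; exists setT; rewrite // clampT. Qed.

Lemma clamps_chain :
  (forall k l, k <> l -> U k `<=` L l \/ U l `<=` L k) ->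
  (forall C D, I C -> I D -> C `<=` D \/ D `<=` C) ->
  forall J1 J2, clamps L U I J1 -> clamps L U I J2 ->
    J1 `<=` J2 \/ J2 `<=` J1.
Proof.
move=> ordered chainI _ _ [k _ [C IC <-]] [l _ [D ID <-]].
have [<-|kl] := pselect (k = l).
  by case: (chainI C D IC ID) => CD; [left | right]; exact: clampS.
case: (ordered k l kl) => [Ukl | Ulk]; [left | right].
  apply: subset_trans (clamp_sub _ _ C) _.
  exact: subset_trans Ukl (sub_clamp _ _ D (LU l)).
apply: subset_trans (clamp_sub _ _ D) _.
exact: subset_trans Ulk (sub_clamp _ _ C (LU k)).
Qed.

End Clamps.

Lemma sub_sigma_clamps (T : pointedType) (K : Type) (L U : K -> set T)
    (I : set (set T)) :
  countable [set: K] -> I set0 -> (forall k, L k `<=` U k) ->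
  \bigcup_k (U k `\` L k) = setT ->
  I `<=` <<s clamps L U I >>.
Proof.
move=> cK I0 LU cover C IC.
have clamps_sigma : clamps L U I `<=` (clamps L U I).-sigma.-measurable.
  exact: sub_gen_smallest.
have -> : C = \bigcup_k (clamp (L k) (U k) C `\` L k).
  rewrite (eq_bigcupr (fun k _ => clampD (L k) (U k) C)).
  by rewrite -setI_bigcupr cover setIT.
apply: (countable_bigcupT_measurable (T := g_sigma_algebraType (clamps L U I))).
  exact: cK.
move=> k.
apply: measurableD; apply: clamps_sigma; last exact: clamps_floor.
by exists k => //; apply: imageP.
Qed.

Lemma in_Sigma_clamps d (T : measurableType d) (K : Type) (L U : K -> set T)
    (I : set (set T)) (lo up : K) :
  in_Sigma measurable I ->
  (forall k, measurable (L k)) -> (forall k, measurable (U k)) ->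
  (forall k, L k `<=` U k) ->
  (forall k l, k <> l -> U k `<=` L l \/ U l `<=` L k) ->
  countable [set: K] -> \bigcup_k (U k `\` L k) = setT ->
  L lo = set0 -> U up = setT ->
  in_Sigma measurable (clamps L U I).
Proof.
move=> [Isub chainI I0 IT genI] mL mU LU ordered cK cover Llo Uup.
have clamps_meas : clamps L U I `<=` measurable.
  move=> _ [k _ [C /Isub mC <-]].
  by apply: measurableI => //; apply: measurableU.
split; [exact: clamps_meas | exact: clamps_chain
       | rewrite -Llo; exact: clamps_floor
       | rewrite -Uup; exact: clamps_ceil |].
apply/seteqP; split.
  exact: smallest_sub (sigma_algebra_measurable _) clamps_meas.
rewrite -genI; apply: smallest_sub; first exact: smallest_sigma_algebra.
exact: sub_sigma_clamps.
Qed.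

Section Increasing.
Context {T : Type} (A : nat -> set T).

Definition incr_floor (k : option nat) : set T :=
  match k with Some n.+1 => A n | Some 0 => set0 | None => \bigcup_n A n end.

Definition incr_ceil (k : option nat) : set T :=
  if k is Some n then A n else setT.

Lemma IA_incrE I : IA_incr I A = clamps incr_floor incr_ceil I.
Proof.
apply/seteqP; split=> J.
- case=> [[C IC ->]|[[C [n [IC ->]]]|[C IC ->]]].
  + by exists (Some 0) => //; rewrite -[C]setU0; apply: imageP.
  + by exists (Some n.+1) => //; apply: imageP.
  + by exists None => //; rewrite -[_ `|` _]setIT; apply: imageP.
- case=> [[[|n]|]] _ [C IC <-]; rewrite /clamp /=.
  + by left; exists C; rewrite // setU0.
  + by right; left; exists C, n.
  + by right; right; exists C; rewrite // setIT.
Qed.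

Lemma incr_strips_cover : \bigcup_k (incr_ceil k `\` incr_floor k) = setT.
Proof.
apply/seteqP; split=> // x _.
have [[n _ Anx]|notUx] := pselect ((\bigcup_n A n) x); last by exists None.
elim: n Anx => [|n IH] Anx; first by exists (Some 0) => //; split.
have [/IH //|nAnx] := pselect (A n x).
by exists (Some n.+1) => //; split.
Qed.

Hypothesis ndA : forall n, A n `<=` A n.+1.

Lemma incr_floor_ceil k : incr_floor k `<=` incr_ceil k.
Proof. by case: k => [[|n]|] //=; exact: sub0set. Qed.

Lemma incr_strips_ordered k l : k <> l ->
  incr_ceil k `<=` incr_floor l \/ incr_ceil l `<=` incr_floor k.
Proof.
have ceil_floor m n : (m < n)%N -> incr_ceil (Some m) `<=` incr_floor (Some n).
  case: n => // n /ltnSE mn.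
  exact: (homo_leq (@subset_refl T) (@subset_trans T) ndA mn).
case: k l => [m|] [n|] kl.
- have [mn|nm|mn] := ltngtP m n; [left | right |]; try exact: ceil_floor.
  by rewrite mn in kl.
- by left=> /= x Amx; exists m.
- by right=> /= x Anx; exists n.
- by case: kl.
Qed.

End Increasing.

Section Decreasing.
Context {T : Type} (A : nat -> set T).

Definition decr_floor (k : option nat) : set T :=
  if k is Some n then A n else set0.

Definition decr_ceil (k : option nat) : set T :=
  match k with Some n.+1 => A n | Some 0 => setT | None => \bigcap_n A n end.

Lemma IA_decrE I : IA_decr I A = clamps decr_floor decr_ceil I.
Proof.
apply/seteqP; split=> J.
- case=> [[C IC ->]|[[C [n [IC ->]]]|[C IC ->]]].
  + by exists None => //; rewrite -[C]setU0; apply: imageP.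
  + by exists (Some n.+1) => //; apply: imageP.
  + by exists (Some 0) => //; rewrite -[_ `|` _]setIT; apply: imageP.
- case=> [[[|n]|]] _ [C IC <-]; rewrite /clamp /=.
  + by right; right; exists C; rewrite // setIT.
  + by right; left; exists C, n.
  + by left; exists C; rewrite // setU0.
Qed.

Lemma decr_strips_cover : \bigcup_k (decr_ceil k `\` decr_floor k) = setT.
Proof.
apply/seteqP; split=> // x _.
have [capAx|/existsNP[n nAnx]] := pselect (forall n, A n x).
  by exists None => //; split => // n _; exact: capAx.
elim: n nAnx => [|n IH] nAnx; first by exists (Some 0) => //; split.
have [Anx|/IH //] := pselect (A n x).
by exists (Some n.+1) => //; split.
Qed.

Hypothesis niA : forall n, A n.+1 `<=` A n.

Lemma decr_floor_ceil k : decr_floor k `<=` decr_ceil k.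
Proof. by case: k => [[|n]|] //=; exact: sub0set. Qed.

Lemma decr_strips_ordered k l : k <> l ->
  decr_ceil k `<=` decr_floor l \/ decr_ceil l `<=` decr_floor k.
Proof.
have ceil_floor m n : (m < n)%N -> decr_ceil (Some n) `<=` decr_floor (Some m).
  case: n => // n /ltnSE mn.
  exact: (homo_leq (r := fun X Y => Y `<=` X) (@subset_refl T)
            (fun Y X Z YX ZY => @subset_trans T Y Z X ZY YX) niA mn).
case: k l => [m|] [n|] kl.
- have [mn|nm|mn] := ltngtP m n; [right | left |]; try exact: ceil_floor.
  by rewrite mn in kl.
- by right=> /= x capAx; exact: capAx.
- by left=> /= x capAx; exact: capAx.
- by case: kl.
Qed.

End Decreasing.

Theorem lemma5 (d : measure_display) (T : measurableType d)
  (I : set (set T)) (A : nat -> set T) :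
  in_Sigma measurable I ->
  (forall n, measurable (A n)) ->
  ((forall n, A n `<=` A n.+1) ->
     (forall n, IA_incr I A (A n)) /\ IA_incr I A (\bigcup_n A n) /\
     in_Sigma measurable (IA_incr I A)) /\
  ((forall n, A n.+1 `<=` A n) ->
     (forall n, IA_decr I A (A n)) /\ IA_decr I A (\bigcap_n A n) /\
     in_Sigma measurable (IA_decr I A)).
Proof.
move=> SigmaI mA; have [_ _ I0 IT _] := SigmaI.
split=> monoA.
- have LU := incr_floor_ceil A monoA.
  rewrite IA_incrE; split; [|split].
  + by move=> n; exact: (clamps_floor LU (Some n.+1) I0).
  + exact: (clamps_floor LU None I0).
  + apply: (@in_Sigma_clamps _ _ _ _ _ _ (Some 0) None) => //.
    * by case=> [[|n]|] /=;
        [exact: measurable0 | exact: mA | exact: bigcupT_measurable].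
    * by case=> [n|] /=; [exact: mA | exact: measurableT].
    * exact: incr_strips_ordered.
    * exact: incr_strips_cover.
- have LU := decr_floor_ceil A monoA.
  rewrite IA_decrE; split; [|split].
  + by move=> n; exact: (clamps_floor LU (Some n) I0).
  + exact: (@clamps_ceil _ _ (decr_floor A) (decr_ceil A) I None IT).
  + apply: (@in_Sigma_clamps _ _ _ _ _ _ None (Some 0)) => //.
    * by case=> [n|] /=; [exact: mA | exact: measurable0].
    * by case=> [[|n]|] /=;
        [exact: measurableT | exact: mA | exact: bigcapT_measurable].
    * exact: decr_strips_ordered.
    * exact: decr_strips_cover.
Qed.
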